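(* Let $G$ be a strongly Deza graph with parameters $(n,k,b,a)$. Then: (i) $G$ has at most five distinct eigenvalues. (ii) If $G$ has exactly two distinct eigenvalues, then $a=0$, $b=k-1\geqslant 1$, and $G$ is a disjoint union of (at least two) cliques of order $k+1$. (iii) If $G$ has exactly three distinct eigenvalues, then one of the following holds: $G$ is a strongly regular graph with parameters $(n,k,\lambda,\mu)$ where $\{\lambda,\mu\}=\{a,b\}$; or $G$ is disconnected and each connected component is a strongly regular graph with parameters $(v,k,b,b)$ for some $v$; or each connected component of $G$ is a complete bipartite graph $K_{k,k}$ with $k\geqslant 2$.
   Context: All graphs are finite, simple and undirected; eigenvalues of a graph are those of its adjacency matrix. A Deza graph with parameters $(n,k,b,a)$, where $b\geqslant a$, is a $k$-regular graph on $n$ vertices, which is neither complete nor edgeless, such that any two distinct vertices have exactly $b$ or exactly $a$ common neighbours. If $b>a$, the children $G_A$ and $G_B$ of $G$ are the graphs on the vertex set of $G$ in which two distinct vertices are adjacent if and only if they have exactly $a$ (for $G_A$), respectively exactly $b$ (for $G_B$), common neighbours in $G$; if $b=a$, $G_A$ is the complete graph and $G_B$ is the edgeless graph. A strongly regular graph with parameters $(n,k,\lambda,\mu)$ is a $k$-regular graph on $n$ vertices, neither complete nor edgeless, in which any two adjacent vertices have exactly $\lambda$ common neighbours and any two distinct non-adjacent vertices have exactly $\mu$ common neighbours (disconnected examples, i.e. disjoint unions of at least two cliques of equal size, are allowed). A strongly Deza graph is a Deza graph both of whose children are strongly regular graphs. *)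

From mathcomp Require Import all_boot all_order all_algebra algC.
Set Implicit Arguments.
Unset Strict Implicit.
Unset Printing Implicit Defensive.
Import GRing.Theory Num.Theory.

Section Graphs.
Variable n : nat.
Implicit Types (adj : rel 'I_n) (C : {set 'I_n}).

Definition simple_graph adj : Prop :=
  (forall x y, adj x y = adj y x) /\ (forall x, ~~ adj x x).

Definition common_nbrs adj (x y : 'I_n) : nat :=
  #|[set z | adj x z && adj y z]|.

Definition regular adj (k : nat) : Prop :=
  forall x, #|[set y | adj x y]| = k.

Definition complete adj : Prop := forall x y, x != y -> adj x y.
Definition edgeless adj : Prop := forall x y, ~~ adj x y.

Definition deza adj (k b a : nat) : Prop :=
  [/\ simple_graph adj, regular adj k, ~ complete adj, ~ edgeless adj &
      a <= b /\
      forall x y, x != y -> common_nbrs adj x y = b \/ common_nbrs adj x y = a].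

Definition childA adj (b a : nat) : rel 'I_n :=
  fun x y => if a < b then (x != y) && (common_nbrs adj x y == a) else x != y.
Definition childB adj (b a : nat) : rel 'I_n :=
  fun x y => if a < b then (x != y) && (common_nbrs adj x y == b) else false.

Definition srg adj (k lam mu : nat) : Prop :=
  [/\ simple_graph adj, regular adj k, ~ complete adj, ~ edgeless adj &
      (forall x y, x != y -> adj x y -> common_nbrs adj x y = lam) /\
      forall x y, x != y -> ~~ adj x y -> common_nbrs adj x y = mu].

Definition is_srg adj : Prop := exists k lam mu, srg adj k lam mu.

Definition strongly_deza adj (k b a : nat) : Prop :=
  [/\ deza adj k b a, is_srg (childA adj b a) & is_srg (childB adj b a)].

Definition adjmx adj : 'M[algC]_n := \matrix_(i, j) ((adj i j)%:R)%R.

Definition num_eigenvalues (A : 'M[algC]_n) (m : nat) : Prop :=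
  exists s : seq algC, [/\ uniq s, size s = m & forall x, eigenvalue A x <-> x \in s].

Definition component adj (x : 'I_n) : {set 'I_n} := [set y | connect adj x y].
Definition connected_graph adj : Prop := forall x y, connect adj x y.

(* G is a disjoint union of at least two cliques, each of order m *)
Definition union_of_cliques adj (m : nat) : Prop :=
  [/\ forall x y, x != y -> adj x y = connect adj x y,
      forall x, #|component adj x| = m &
      exists x y, ~~ connect adj x y].

Definition srg_on adj C (v k lam mu : nat) : Prop :=
  [/\ #|C| = v,
      forall x, x \in C -> #|[set y in C | adj x y]| = k,
      ~ (forall x y, x \in C -> y \in C -> x != y -> adj x y),
      ~ (forall x y, x \in C -> y \in C -> ~~ adj x y) &
      (forall x y, x \in C -> y \in C -> x != y -> adj x y ->
        #|[set z in C | adj x z && adj y z]| = lam) /\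
      forall x y, x \in C -> y \in C -> x != y -> ~~ adj x y ->
        #|[set z in C | adj x z && adj y z]| = mu].

Definition complete_bipartite_on adj C (k : nat) : Prop :=
  exists X Y : {set 'I_n},
    [/\ X :&: Y = set0, X :|: Y = C, #|X| = k, #|Y| = k &
        forall x y, x \in C -> y \in C ->
          adj x y = ((x \in X) && (y \in Y)) || ((x \in Y) && (y \in X))].

End Graphs.

(* Let A be the adjacency matrix of a strongly Deza graph G with parameters
   (n,k,b,a), B that of its child G_B, and J the all-ones matrix.  Since two
   distinct vertices have b or a common neighbours, A^2 = kI + bB + a(J-I-B).

   (i) An eigenvector of A for an eigenvalue th <> k is orthogonal to the
   all-ones vector, hence an eigenvector of B for be = (th^2 - k + a)/(b - a).
   As G_B is strongly regular, be is a root of a fixed quadratic, so th lies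
   in {k, +-sqrt(k - a + (b - a) be_1), +-sqrt(k - a + (b - a) be_2)}.

   (ii), (iii) A is real symmetric, so the product of (X - th) over its
   distinct eigenvalues th annihilates A.  For eigenvalues {k, th} this forces
   th = -1 and common neighbour counts k - 1 (edges) and 0 (non-edges), i.e. a
   union of cliques.  For eigenvalues {k, r, t}: if G is connected then
   (A - rI)(A - tI) is a matrix of k-eigenvectors, hence constant, so G is
   strongly regular; if G is disconnected then a = 0, G_B is a union of
   cliques, and the identity A (A - rI)(A - tI) = k (A - rI)(A - tI) shows
   that either every edge has no common neighbour (the components are
   K_{k,k}) or every edge has b of them (the components are the cliques of
   G_B, strongly regular with lambda = mu = b). *)

From mathcomp Require Import all_boot all_order all_algebra algC.
From mathcomp Require Import ring.
Set Implicit Arguments.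
Unset Strict Implicit.
Unset Printing Implicit Defensive.
Import GRing.Theory Num.Theory Num.Def.
Local Open Scope ring_scope.

Lemma not_forall2 (T : finType) (P : T -> T -> bool) :
  ~ (forall x y, P x y) -> exists x y, ~~ P x y.
Proof.
move=> nP; case: (boolP [exists x, exists y, ~~ P x y]).
  by move/existsP => [x /existsP [y H]]; exists x, y.
rewrite negb_exists => /forallP H; case: nP => x y.
by move: (H x); rewrite negb_exists => /forallP /(_ y); rewrite negbK.
Qed.

Lemma edge_exists (m : nat) (r : rel 'I_m) : ~ edgeless r -> exists x y, r x y.
Proof.
by move/(@not_forall2 _ (fun x y => ~~ r x y)) => [x [y]]; rewrite negbK; exists x, y.
Qed.

Lemma card_sumb (m : nat) (P : pred 'I_m) :
  (\sum_z (P z : nat))%N = #|[set z | P z]|.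
Proof. by rewrite -sum1dep_card [RHS]big_mkcond /=; apply: eq_bigr => z _; case: (P z). Qed.

(* Over algC, V V^*^T = 0 forces V = 0: the diagonal entries are sums of
   the squared moduli of the entries of V. *)
Lemma mx_conj_eq0 m p (V : 'M[algC]_(m, p)) : V *m (map_mx conjC V)^T = 0 -> V = 0.
Proof.
move=> H; apply/matrixP => i j; rewrite mxE.
have Hs : \sum_l V i l * (V i l)^* = 0.
  have := congr1 (fun M : 'M_m => M i i) H; rewrite !mxE => Hii.
  by rewrite -[RHS]Hii; apply: eq_bigr => l _; rewrite !mxE.
apply/eqP; rewrite -mul_conjC_eq0; apply/eqP.
by apply: (psumr_eq0P _ Hs) => // l _; rewrite mul_conjC_ge0.
Qed.

Lemma scalev_inj m (v : 'rV[algC]_m) (x y : algC) : v != 0 -> x *: v = y *: v -> x = y.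
Proof.
by move=> nz /eqP; rewrite -subr_eq0 -scalerBl scaler_eq0 subr_eq0 (negbTE nz) orbF => /eqP.
Qed.

Section RealSymmetric.
Variable n' : nat.
Local Notation n := n'.+1.

(* For a real symmetric M, W M^2 = 0 implies W M = 0 (M has no nilpotent part). *)
Lemma sym_sq_kill (M W : 'M[algC]_n) : M^T = M -> map_mx conjC M = M ->
  W *m M *m M = 0 -> W *m M = 0.
Proof.
move=> sM rM H; apply: mx_conj_eq0.
by rewrite map_mxM rM trmx_mul sM mulmxA H mul0mx.
Qed.

Lemma eigenvalue_quadratic (M : 'M[algC]_n) (c d th : algC) :
  M *m M = c%:M + d *: M -> eigenvalue M th -> th ^+ 2 = c + d * th.
Proof.
move=> MM /eigenvalueP [v vM nz].
have : v *m (M *m M) = th ^+ 2 *: v by rewrite mulmxA vM -scalemxAl vM scalerA expr2.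
rewrite MM mulmxDr mul_mx_scalar -scalemxAr vM scalerA -scalerDl.
by move/(scalev_inj nz).
Qed.

Lemma horner_mx_XsubC (M : 'M[algC]_n) z : horner_mx M ('X - z%:P) = M - z%:M.
Proof. by rewrite rmorphB /= horner_mx_X horner_mx_C. Qed.

Variable A : 'M[algC]_n.
Hypotheses (A_sym : A^T = A) (A_real : map_mx conjC A = A).

Lemma eigenvalue_real z : eigenvalue A z -> z^* = z.
Proof.
move=> /eigenvalueP [v Av nz].
have E1 : v *m A *m (map_mx conjC v)^T = z *: (v *m (map_mx conjC v)^T).
  by rewrite Av scalemxAl.
have E2 : v *m A *m (map_mx conjC v)^T = z^* *: (v *m (map_mx conjC v)^T).
  rewrite -mulmxA -{1}A_sym -trmx_mul -A_real -map_mxM Av map_mxZ /= linearZ /=.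
  by rewrite -scalemxAr.
have : (z - z^*) *: (v *m (map_mx conjC v)^T) = 0.
  by rewrite scalerBl -E1 -E2 subrr.
move/eqP; rewrite scaler_eq0 subr_eq0 => /orP [/eqP H|/eqP H]; first by rewrite -H.
by case/eqP: nz; apply: mx_conj_eq0.
Qed.

Lemma annihilator_reduce z Q : z^* = z ->
  horner_mx A (('X - z%:P) ^+ 2 * Q) = 0 -> horner_mx A (('X - z%:P) * Q) = 0.
Proof.
move=> hz.
have sM : (A - z%:M)^T = A - z%:M by rewrite linearB /= tr_scalar_mx A_sym.
have rM : map_mx conjC (A - z%:M) = A - z%:M.
  by rewrite map_mxB map_scalar_mx A_real /= hz.
rewrite expr2 [_ * Q]mulrC [_ * Q]mulrC !rmorphM /= horner_mx_XsubC mulrA -!mulmxE.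
exact: sym_sq_kill.
Qed.

Lemma annihilator_undup (s : seq algC) : (forall z, z \in s -> z^* = z) -> forall Q,
  horner_mx A (\prod_(z <- s) ('X - z%:P) * Q) = 0 ->
  horner_mx A (\prod_(z <- undup s) ('X - z%:P) * Q) = 0.
Proof.
elim: s => [//|z s IH] Hs Q H.
have H' : horner_mx A (\prod_(y <- undup s) ('X - y%:P) * (('X - z%:P) * Q)) = 0.
  apply: IH => [y ys|]; first by apply: Hs; rewrite inE ys orbT.
  by rewrite -H big_cons -mulrA mulrCA.
rewrite /=; case: ifP => zs; last by rewrite big_cons -mulrA mulrCA.
have zu : z \in undup s by rewrite mem_undup.
rewrite (perm_big _ (perm_to_rem zu)) big_cons /= in H' *.
rewrite -mulrA; apply: annihilator_reduce; first by apply: Hs; rewrite inE eqxx.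
by rewrite -H' expr2 -!mulrA; congr (horner_mx A (_ * _)); rewrite mulrCA.
Qed.

(* A real symmetric matrix is annihilated by the product of (X - z) over its
   distinct eigenvalues z (Cayley-Hamilton plus the reduction above). *)
Lemma distinct_eigenvalues_annihilate (s : seq algC) : uniq s ->
  (forall x, eigenvalue A x <-> x \in s) ->
  horner_mx A (\prod_(z <- s) ('X - z%:P)) = 0.
Proof.
move=> us Hs.
have [rs Hrs] := closed_field_poly_normal (char_poly A).
rewrite (monicP (char_poly_monic A)) scale1r in Hrs.
have eig_rs z : eigenvalue A z = (z \in rs).
  by rewrite eigenvalue_root_char Hrs root_prod_XsubC.
have real_rs z : z \in rs -> z^* = z by move=> zr; apply: eigenvalue_real; rewrite eig_rs.
have := annihilator_undup real_rs (Q := 1).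
rewrite !mulr1 -Hrs Cayley_Hamilton => /(_ erefl).
suff P : perm_eq (undup rs) s by rewrite (perm_big _ P).
apply: uniq_perm; rewrite ?undup_uniq // => x.
by rewrite mem_undup -eig_rs; apply/idP/idP => /Hs.
Qed.
End RealSymmetric.

Section AdjacencyMatrix.
Variables (n' : nat) (r : rel 'I_n'.+1).
Local Notation n := n'.+1.
Local Notation A := (adjmx r).
Local Notation J := (const_mx 1 : 'M[algC]_n).
Hypothesis r_sym : forall x y, r x y = r y x.

Lemma adjmx_sym : A^T = A.
Proof. by apply/matrixP => x y; rewrite !mxE r_sym. Qed.

Lemma adjmx_real : map_mx conjC A = A.
Proof. by apply/matrixP => x y; rewrite !mxE conjC_nat. Qed.

Lemma common_sym x y : common_nbrs r x y = common_nbrs r y x.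
Proof. by rewrite /common_nbrs; apply: eq_card => z; rewrite !inE andbC. Qed.

Lemma adjmx_sq x y : (A *m A) x y = (common_nbrs r x y)%:R.
Proof.
rewrite mxE /common_nbrs -card_sumb natr_sum; apply: eq_bigr => z _.
by rewrite !mxE -natrM mulnb (r_sym z y).
Qed.

Lemma J_factor : J = (const_mx 1 : 'cV_n) *m (const_mx 1 : 'rV_n).
Proof. by apply/matrixP => x y; rewrite !mxE big_ord1 !mxE mulr1. Qed.

Lemma connect_invariant (S : pred 'I_n) x y :
  (forall u w, r u w -> S u -> S w) -> S x -> connect r x y -> S y.
Proof.
move=> H Sx cxy.
have cl : closed r S by move=> u w uw; apply/idP/idP; apply: H; rewrite // r_sym.
by have := closed_connect cl cxy; rewrite !unfold_in Sx => <-.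
Qed.

Lemma srg_sq kk lam mu : srg r kk lam mu ->
  A *m A = kk%:R%:M + lam%:R *: A + mu%:R *: (J - 1%:M - A).
Proof.
case=> [[_ r_irr] Hr _ _ [Hl Hm]]; apply/matrixP => x y.
rewrite adjmx_sq !mxE; case: (eqVneq x y) => [<-|nxy].
  rewrite (negbTE (r_irr x)) /= mulr0 addr0 subrr subr0 mulr0 addr0 /common_nbrs -(Hr x).
  by congr (_%:R); apply: eq_card => z; rewrite !inE andbb.
rewrite /= mulr0n add0r subr0; case: (boolP (r x y)) => rxy.
  by rewrite (Hl _ _ nxy rxy) mulr1 subrr mulr0 addr0.
by rewrite (Hm _ _ nxy rxy) mulr0 subr0 mulr1 add0r.
Qed.

Lemma srg_eigvec kk lam mu (v : 'rV[algC]_n) (be : algC) :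
  srg r kk lam mu -> v != 0 -> v *m J = 0 -> v *m A = be *: v ->
  be ^+ 2 = (kk%:R - mu%:R) + (lam%:R - mu%:R) * be.
Proof.
move=> Hsrg nz vJ vA.
have vA2 : v *m (A *m A) = be ^+ 2 *: v.
  by rewrite mulmxA vA -scalemxAl vA scalerA expr2.
rewrite (srg_sq Hsrg) !mulmxDr -!scalemxAr !mulmxBr vJ mul_mx_scalar mulmx1 vA in vA2.
have [j vj] : exists j, v 0 j != 0.
  apply/existsP; apply: contraR nz; rewrite negb_exists => /forallP H.
  by apply/eqP/rowP => j; rewrite mxE; apply/eqP; move: (H j); rewrite negbK.
have := congr1 (fun M : 'rV_n => M 0 j) vA2; rewrite !mxE => E.
apply: (mulIf vj); apply/eqP; rewrite -subr_eq0; apply/eqP.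
by rewrite -[RHS](subrr (be ^+ 2 * v 0 j)) -{1}E; ring.
Qed.

Section Regular.
Variable kk : nat.
Hypothesis r_reg : regular r kk.

Lemma regular_diag x : common_nbrs r x x = kk.
Proof. by rewrite /common_nbrs -(r_reg x); apply: eq_card => z; rewrite !inE andbb. Qed.

Lemma row_sum x : \sum_y A x y = kk%:R.
Proof.
by rewrite -(r_reg x) -card_sumb natr_sum; apply: eq_bigr => y _; rewrite mxE.
Qed.

Lemma ones_col : A *m (const_mx 1 : 'cV_n) = kk%:R *: (const_mx 1 : 'cV_n).
Proof.
apply/matrixP => x j; rewrite !mxE mulr1 -(row_sum x).
by apply: eq_bigr => y _; rewrite !mxE mulr1.
Qed.

Lemma degree_eigenvalue : eigenvalue A kk%:R.
Proof.
apply/eigenvalueP; exists (const_mx 1).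
  apply/rowP => y; rewrite !mxE mulr1 -(row_sum y).
  by apply: eq_bigr => x _; rewrite !mxE mul1r r_sym.
by apply/eqP => /rowP /(_ ord0); rewrite !mxE => /eqP; rewrite oner_eq0.
Qed.

Lemma eigvec_perp_ones (v : 'rV[algC]_n) th :
  v *m A = th *: v -> th != kk%:R -> v *m J = 0.
Proof.
move=> Av nk; pose u := const_mx 1 : 'cV[algC]_n.
have : (th - kk%:R) *: (v *m u) = 0.
  by rewrite scalerBl scalemxAl -Av -mulmxA ones_col -scalemxAr subrr.
move/eqP; rewrite scaler_eq0 subr_eq0 (negbTE nk) => /eqP vu0.
by rewrite J_factor mulmxA vu0 mul0mx.
Qed.

(* A kk-eigenvector takes equal values at adjacent vertices: the Laplacian
   quadratic form sum_{x~y} |v x - v y|^2 vanishes. *)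
Lemma degree_eigvec_edge (v : 'cV[algC]_n) : A *m v = kk%:R *: v ->
  forall x y, r x y -> v x 0 = v y 0.
Proof.
move=> Av; pose w x := v x 0.
have S1 x : \sum_y (r x y)%:R * ((w x - w y) * (w x)^*) = 0.
  under eq_bigr => y _ do rewrite mulrA.
  rewrite -big_distrl /=; apply/eqP; rewrite mulf_eq0; apply/orP; left.
  under eq_bigr => y _ do rewrite mulrBr.
  have deg : \sum_y (r x y)%:R = kk%:R :> algC.
    by rewrite -(row_sum x); apply: eq_bigr => y _; rewrite mxE.
  have Aw : \sum_y (r x y)%:R * w y = kk%:R * w x.
    have := congr1 (fun M : 'cV_n => M x 0) Av; rewrite !mxE => <-.
    by apply: eq_bigr => y _; rewrite mxE.
  by rewrite sumrB Aw -big_distrl /= deg subrr.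
pose F x y := (r x y)%:R * ((w x - w y) * (w x - w y)^*) : algC.
have Fge0 x y : 0 <= F x y by rewrite mulr_ge0 ?ler0n ?mul_conjC_ge0.
have Fsum : \sum_x \sum_y F x y = 0.
  have -> : \sum_x \sum_y F x y = \sum_x \sum_y (r x y)%:R * ((w x - w y) * (w x)^*)
      + \sum_x \sum_y (r x y)%:R * ((w y - w x) * (w y)^*).
    rewrite -big_split /=; apply: eq_bigr => x _.
    rewrite -big_split /=; apply: eq_bigr => y _.
    by rewrite /F rmorphB /=; ring.
  rewrite big1 ?add0r; last by move=> x _; apply: S1.
  rewrite exchange_big /=; apply: big1 => y _.
  by rewrite -[RHS](S1 y); apply: eq_bigr => x _; rewrite r_sym.
move=> x y xy.
have Gx : \sum_y F x y = 0 by apply: (psumr_eq0P _ Fsum) => // x' _; exact: sumr_ge0.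
have := psumr_eq0P (fun y _ => Fge0 x y) Gx (i := y) isT.
by rewrite /F xy mul1r => /eqP; rewrite mul_conjC_eq0 subr_eq0 => /eqP.
Qed.

Lemma connected_degree_eigmx (M : 'M[algC]_n) : connected_graph r ->
  A *m M = kk%:R *: M -> M^T = M -> forall x y, M x y = M ord0 ord0.
Proof.
move=> Hc AM sM.
have colc j x y : M x j = M y j.
  have Av : A *m col j M = kk%:R *: col j M by rewrite colE mulmxA AM -scalemxAl.
  apply/esym/eqP; apply: (connect_invariant (S := fun y => M y j == M x j)) (Hc x y) => //.
  by move=> u w uw /eqP Hu; move: (degree_eigvec_edge Av uw); rewrite !mxE Hu => ->.
move=> x y; rewrite (colc y x ord0).
by have := congr1 (fun N : 'M_n => N ord0 y) sM; rewrite mxE => <-; apply: colc.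
Qed.
End Regular.
End AdjacencyMatrix.

Lemma sq_cases (x g : algC) : x ^+ 2 = g -> x = sqrtC g \/ x = - sqrtC g.
Proof.
move=> H; have : (x - sqrtC g) * (x + sqrtC g) = 0.
  by rewrite -subr_sqr sqrtCK H subrr.
by move/eqP; rewrite mulf_eq0 subr_eq0 addr_eq0 => /orP [] /eqP; tauto.
Qed.

Lemma quad_cases (be c0 c1 : algC) : be ^+ 2 = c0 + c1 * be ->
  let d := sqrtC (c1 ^+ 2 + 4 * c0) in
  be = (c1 + d) / 2 \/ be = c1 - (c1 + d) / 2.
Proof.
move=> H d.
have hd : d ^+ 2 = c1 ^+ 2 + 4 * c0 by rewrite sqrtCK.
have h2 : (2 : algC) != 0 by rewrite pnatr_eq0.
have : (be - (c1 + d) / 2) * (be - (c1 - (c1 + d) / 2)) = 0.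
  have -> : (be - (c1 + d) / 2) * (be - (c1 - (c1 + d) / 2)) =
    (be ^+ 2 - c0 - c1 * be) - (d ^+ 2 - (c1 ^+ 2 + 4 * c0)) / 4 by field.
  by rewrite H hd subrr mul0r subr0; ring.
by move/eqP; rewrite mulf_eq0 !subr_eq0 => /orP [] /eqP; tauto.
Qed.

Section StronglyDeza.
Variables (n' : nat) (adj : rel 'I_n'.+1) (k b a : nat).
Local Notation n := n'.+1.
Hypothesis Hsd : strongly_deza adj k b a.
Local Notation A := (adjmx adj).
Local Notation c := (common_nbrs adj).
Local Notation Bm := (adjmx (childB adj b a)).
Local Notation J := (const_mx 1 : 'M[algC]_n).

Lemma G_deza : deza adj k b a. Proof. by case: Hsd. Qed.
Lemma adj_sym x y : adj x y = adj y x. Proof. by case: G_deza => [[]]. Qed.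
Lemma adj_irr x : ~~ adj x x. Proof. by case: G_deza => [[]]. Qed.
Lemma adj_reg : regular adj k. Proof. by case: G_deza. Qed.
Lemma common_ba x y : x != y -> c x y = b \/ c x y = a.
Proof. by case: G_deza => _ _ _ _ [_]; apply. Qed.

Lemma adj_neq x y : adj x y -> x != y.
Proof. by apply: contraTneq => <-; rewrite (negbTE (adj_irr x)). Qed.

(* G_A is not complete, so the two parameters are really distinct. *)
Lemma altb : (a < b)%N.
Proof.
case: Hsd => _ [kA [lA [mA [_ _ H _ _]]]] _.
case: ltnP => // ba; case: H => x y nxy.
by rewrite /childA ltnNge ba /=.
Qed.

Lemma childBE x y : childB adj b a x y = (x != y) && (c x y == b).
Proof. by rewrite /childB altb. Qed.

Lemma childAE x y : childA adj b a x y = (x != y) && (c x y == a).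
Proof. by rewrite /childA altb. Qed.

Lemma childB_sym x y : childB adj b a x y = childB adj b a y x.
Proof. by rewrite !childBE eq_sym common_sym. Qed.

(* Both children have edges: both values b and a actually occur. *)
Lemma b_occurs : exists x y, x != y /\ c x y = b.
Proof.
case: Hsd => _ _ [kB [lB [mB [_ _ _ HBne _]]]].
by have [x [y]] := edge_exists HBne; rewrite childBE => /andP [nxy /eqP cb]; exists x, y.
Qed.

Lemma a_occurs : exists x y, x != y /\ c x y = a.
Proof.
case: Hsd => _ [kA [lA [mA [_ _ _ HAne _]]]] _.
by have [x [y]] := edge_exists HAne; rewrite childAE => /andP [nxy /eqP ca]; exists x, y.
Qed.

Lemma nonedge_exists : exists x y, x != y /\ ~~ adj x y.
Proof.
case: G_deza => _ _ Hnc _ _.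
have [x [y]] : exists x y, ~~ ((x != y) ==> adj x y).
  by apply: not_forall2 => H; apply: Hnc => x y /(implyP (H x y)).
by rewrite negb_imply => /andP [nxy nadj]; exists x, y.
Qed.

Lemma k_gt0 : (0 < k)%N.
Proof.
case: (posnP k) => // k0; case: G_deza => _ _ _ Hne _; case: Hne => x y; apply/negP => H.
have := adj_reg x; rewrite k0 => /eqP; rewrite cards_eq0 => /eqP /setP /(_ y).
by rewrite !inE H.
Qed.

Lemma has_nbr x : exists y, adj x y.
Proof.
have : (0 < #|[set y | adj x y]|)%N by rewrite adj_reg k_gt0.
by rewrite card_gt0 => /set0Pn [y]; rewrite inE; exists y.
Qed.

Lemma adjmx_sq_deza : A *m A = k%:R%:M + b%:R *: Bm + a%:R *: (J - 1%:M - Bm).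
Proof.
apply/matrixP => x y; rewrite adjmx_sq; last exact: adj_sym.
rewrite !mxE; case: (eqVneq x y) => [<-|nxy].
  rewrite (regular_diag adj_reg) childBE eqxx /= mulr0 addr0 subrr subr0 mulr0 addr0.
  by rewrite mulr1n.
rewrite /= mulr0n add0r subr0 childBE nxy /=.
case: (common_ba nxy) => ->; first by rewrite eqxx mulr1 subrr mulr0 addr0.
by rewrite (ltn_eqF altb) mulr0 subr0 mulr1 add0r.
Qed.

Lemma ba_neq0 : (b%:R - a%:R : algC) != 0.
Proof. by rewrite subr_eq0 eqr_nat neq_ltn altb orbT. Qed.

Lemma eigvec_childB (v : 'rV[algC]_n) th : v *m A = th *: v -> v *m J = 0 ->
  v *m Bm = ((th ^+ 2 - (k%:R - a%:R)) / (b%:R - a%:R)) *: v.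
Proof.
move=> Av vJ.
have vA2 : v *m (A *m A) = th ^+ 2 *: v.
  by rewrite mulmxA Av -scalemxAl Av scalerA expr2.
rewrite adjmx_sq_deza !mulmxDr -!scalemxAr !mulmxBr vJ mul_mx_scalar mulmx1 in vA2.
apply/rowP => j; have := congr1 (fun M : 'rV_n => M 0 j) vA2; rewrite !mxE => E.
apply: (mulfI ba_neq0); rewrite mulrA mulrCA (mulfV ba_neq0) mulr1.
apply/eqP; rewrite -subr_eq0; apply/eqP.
by rewrite -[RHS](subrr (th ^+ 2 * v 0 j)) -{1}E; ring.
Qed.

Lemma eigenvalue_cases kB lB mB th : srg (childB adj b a) kB lB mB ->
  eigenvalue A th -> th = k%:R \/ exists be : algC,
    be ^+ 2 = (kB%:R - mB%:R) + (lB%:R - mB%:R) * be /\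
    th ^+ 2 = (k%:R - a%:R) + (b%:R - a%:R) * be.
Proof.
move=> HB /eigenvalueP [v Av nz].
case: (eqVneq th k%:R) => [-> | nk]; [by left | right].
have vJ := eigvec_perp_ones adj_reg Av nk.
exists ((th ^+ 2 - (k%:R - a%:R)) / (b%:R - a%:R)); split.
  exact: (srg_eigvec childB_sym HB nz vJ (eigvec_childB Av vJ)).
by rewrite mulrC mulfVK ?ba_neq0 //; ring.
Qed.

Lemma part_i : exists m, (m <= 5)%N /\ num_eigenvalues A m.
Proof.
case: Hsd => _ _ [kB [lB [mB HB]]].
pose c0 : algC := kB%:R - mB%:R.
pose c1 : algC := lB%:R - mB%:R.
pose d := sqrtC (c1 ^+ 2 + 4 * c0).
pose be1 := (c1 + d) / 2.
pose be2 := c1 - (c1 + d) / 2.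
pose r1 := sqrtC ((k%:R - a%:R) + (b%:R - a%:R) * be1).
pose r2 := sqrtC ((k%:R - a%:R) + (b%:R - a%:R) * be2).
pose L := [:: k%:R; r1; - r1; r2; - r2].
pose s := undup (filter (eigenvalue A) L).
exists (size s); split.
  by apply: leq_trans (size_undup _) _; rewrite size_filter (count_size _ L).
exists s; split => // [|x]; first by rewrite undup_uniq.
rewrite mem_undup mem_filter; split => [Hx|/andP [] //].
rewrite Hx /=; case: (eigenvalue_cases HB Hx) => [->|[be [Hbe Hx2]]].
  by rewrite inE eqxx.
case: (quad_cases Hbe) => Hb; rewrite -/d -/be1 -/be2 in Hb;
  rewrite Hb in Hx2; case: (sq_cases Hx2) => ->; rewrite !inE eqxx ?orbT //.
Qed.

Lemma k_eig : eigenvalue A k%:R.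
Proof. exact: (degree_eigenvalue adj_sym adj_reg). Qed.

Lemma eig_annihilator (s : seq algC) : uniq s ->
  (forall x, eigenvalue A x <-> x \in s) ->
  horner_mx A (('X - (k%:R)%:P) * \prod_(z <- rem k%:R s) ('X - z%:P)) = 0.
Proof.
move=> us Hs; have ks : k%:R \in s by apply/Hs/k_eig.
have <- : \prod_(z <- k%:R :: rem k%:R s) ('X - z%:P) =
   ('X - (k%:R)%:P) * \prod_(z <- rem k%:R s) ('X - z%:P) by rewrite big_cons.
rewrite -(perm_big _ (perm_to_rem ks)).
by apply: distinct_eigenvalues_annihilate => //; [exact: adjmx_sym adj_sym | exact: adjmx_real].
Qed.

Lemma quad_entry (r t : algC) x y :
  ((A - r%:M) *m (A - t%:M)) x y =
  (c x y)%:R - (r + t) * (adj x y)%:R + (r * t) *+ (x == y).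
Proof.
rewrite mulmxBl !mulmxBr mul_mx_scalar mul_scalar_mx -scalar_mxM.
rewrite !mxE; have := adjmx_sq adj_sym x y; rewrite mxE => ->.
by case: (x == y); rewrite ?mulr0n ?mulr1n; ring.
Qed.

(* With two eigenvalues k and th, (A - kI)(A - th I) = 0; the diagonal gives
   th = -1 and then adjacent vertices have k - 1 common neighbours and
   non-adjacent ones none. *)
Lemma two_eigenvalues_common : num_eigenvalues A 2 ->
  forall x y, x != y -> c x y = if adj x y then (k - 1)%N else 0%N.
Proof.
case=> s [us ss Hs].
have := eig_annihilator us Hs.
have : size (rem k%:R s) = 1%N by rewrite size_rem ?ss //; apply/Hs/k_eig.
case: (rem k%:R s) => [|th [|]] // _.
rewrite big_seq1 rmorphM /= !horner_mx_XsubC -mulmxE => H0.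
have E x y := congr1 (fun M : 'M_n => M x y) H0.
have th1 : th = -1.
  have := E ord0 ord0; rewrite quad_entry mxE (regular_diag adj_reg) (negbTE (adj_irr _)).
  rewrite eqxx mulr0 subr0 mulr1n => H.
  have kn0 : (k%:R : algC) != 0 by rewrite pnatr_eq0 -lt0n k_gt0.
  by apply: (mulfI kn0); apply/eqP; rewrite -subr_eq0; apply/eqP; rewrite -H; ring.
move=> x y nxy; have := E x y; rewrite quad_entry mxE (negbTE nxy) mulr0n addr0 th1.
move=> H; apply/eqP; rewrite -(eqr_nat algC); apply/eqP.
move: H; case: (adj x y); rewrite ?mulr1 ?mulr0 ?natrB ?k_gt0 //; last by rewrite subr0.
by move/eqP; rewrite subr_eq0 => /eqP ->.
Qed.

(* If distinct non-adjacent vertices never have a common neighbour, each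
   closed neighbourhood is closed under adjacency, so adjacency coincides
   with connectivity. *)
Lemma adj_connect_of_common :
  (forall x y, x != y -> c x y = if adj x y then (k - 1)%N else 0%N) ->
  forall x y, x != y -> adj x y = connect adj x y.
Proof.
move=> cE x y nxy; apply/idP/idP; first exact: connect1.
move=> cxy; suff : (y == x) || adj x y by rewrite eq_sym (negbTE nxy).
apply: (connect_invariant adj_sym (S := fun y => (y == x) || adj x y)) cxy; last by rewrite eqxx.
move=> u w uw /orP [/eqP ux|xu]; first by rewrite /= -ux uw orbT.
case: (eqVneq w x) => [//|nwx] /=; apply/negPn/negP => nxw.
have := cE x w; rewrite eq_sym nwx (negbTE nxw) => /(_ isT) /eqP.
apply/negP; rewrite -lt0n card_gt0; apply/set0Pn; exists u.
by rewrite inE xu adj_sym uw.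
Qed.

Lemma part_ii : num_eigenvalues A 2 ->
  [/\ a = 0, b = k - 1, 1 <= b & union_of_cliques adj k.+1]%N.
Proof.
move=> H2; have cE := two_eigenvalues_common H2.
have [x1 [y1 [n1 cb]]] := b_occurs.
have [x2 [y2 [n2 ca]]] := a_occurs.
have ab := altb.
have a0 : a = 0%N.
  move: ab; rewrite -ca -cb (cE _ _ n1) (cE _ _ n2).
  by case: (adj x2 y2); case: (adj x1 y1); rewrite ?ltnn ?ltn0.
have bk : b = (k - 1)%N by move: ab; rewrite a0 -cb (cE _ _ n1); case: (adj x1 y1).
have cadj := adj_connect_of_common cE.
split => //; first by move: ab; rewrite a0.
split => // [x|].
  have -> : component adj x = x |: [set y | adj x y].
    apply/setP => y; rewrite !inE; case: (eqVneq y x) => [->|nyx] /=.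
      exact: connect0.
    by rewrite cadj // eq_sym.
  by rewrite cardsU1 inE (negbTE (adj_irr x)) adj_reg.
by have [x [y [nxy nadj]]] := nonedge_exists; exists x, y; rewrite -cadj.
Qed.

Lemma uniform_common_srg :
  (forall x y x' y', x != y -> x' != y' -> adj x y = adj x' y' -> c x y = c x' y') ->
  exists lam mu, srg adj k lam mu /\ ((lam = a /\ mu = b) \/ (lam = b /\ mu = a)).
Proof.
move=> U; case: G_deza => Hs Hr Hnc Hne _.
have [x1 [y1 e1]] := edge_exists Hne; have n1 := adj_neq e1.
have [x2 [y2 [n2 ne2]]] := nonedge_exists.
have Hl x y : x != y -> adj x y -> c x y = c x1 y1.
  by move=> nxy xy; apply: U => //; rewrite xy e1.
have Hm x y : x != y -> ~~ adj x y -> c x y = c x2 y2.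
  by move=> nxy xy; apply: U => //; rewrite (negbTE xy) (negbTE ne2).
exists (c x1 y1), (c x2 y2); split; first by split.
have [x3 [y3 [n3 cb]]] := b_occurs.
have [x4 [y4 [n4 ca]]] := a_occurs.
have cv x y : x != y -> c x y = c x1 y1 \/ c x y = c x2 y2.
  by move=> nxy; case: (boolP (adj x y)) => H'; [left; apply: Hl | right; apply: Hm].
have lmu : c x1 y1 <> c x2 y2.
  move=> E; suff ba : b = a by move: altb; rewrite ba ltnn.
  by case: (cv _ _ n3) => E3; case: (cv _ _ n4) => E4; rewrite -cb -ca E3 E4 ?E.
case: (common_ba n1) => E1; case: (common_ba n2) => E2; rewrite E1 E2 in lmu *; tauto.
Qed.

(* Connected case of (iii): (A - rI)(A - tI) consists of k-eigenvectors, so it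
   is constant, and then common neighbour counts depend only on adjacency. *)
Lemma connected_case (r t : algC) : connected_graph adj ->
  (A - k%:R%:M) *m ((A - r%:M) *m (A - t%:M)) = 0 ->
  exists lam mu, srg adj k lam mu /\ ((lam = a /\ mu = b) \/ (lam = b /\ mu = a)).
Proof.
move=> Hc H; set M := (A - r%:M) *m (A - t%:M) in H.
have AM : A *m M = k%:R *: M.
  by move/eqP: H; rewrite mulmxBl mul_scalar_mx subr_eq0 => /eqP.
have sM : M^T = M.
  by apply/matrixP => x y; rewrite mxE /M !quad_entry (@common_sym _ adj x y) adj_sym eq_sym.
have Mc := connected_degree_eigmx adj_sym adj_reg Hc AM sM.
have cE u w : u != w -> (c u w)%:R = M ord0 ord0 + (r + t) * (adj u w)%:R.
  by move=> nuw; rewrite -(Mc u w) /M quad_entry (negbTE nuw) mulr0n addr0; ring.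
apply: uniform_common_srg => x y x' y' nxy nxy' e.
by apply/eqP; rewrite -(eqr_nat algC) (cE _ _ nxy) (cE _ _ nxy') e.
Qed.

Lemma common_connect u w : (0 < c u w)%N -> connect adj u w.
Proof.
rewrite /common_nbrs card_gt0 => /set0Pn [z]; rewrite inE => /andP [uz wz].
by apply: connect_trans (connect1 uz) (connect1 _); rewrite adj_sym.
Qed.

Section Disconnected.
(* r and t are the two eigenvalues other than k, and G is disconnected. *)
Variables (r t : algC).
Hypothesis Hnconn : ~ connected_graph adj.
Hypothesis Hann : (A - k%:R%:M) *m ((A - r%:M) *m (A - t%:M)) = 0.

Lemma disconnected_pair : exists x0 y0, [/\ x0 != y0, ~~ connect adj x0 y0 & c x0 y0 = 0%N].
Proof.
have [x0 [y0 nc]] := not_forall2 (P := connect adj) Hnconn.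
exists x0, y0; split => //; first by apply: contraNneq nc => ->; exact: connect0.
by apply/eqP; rewrite -leqn0 leqNgt; apply: contra nc; exact: common_connect.
Qed.

(* Vertices in different components have no common neighbour, so a = 0. *)
Lemma a_eq0 : a = 0%N.
Proof.
have [x0 [y0 [nxy _ c0]]] := disconnected_pair.
case: (common_ba nxy) => H0; rewrite c0 in H0; last by [].
by move: altb; rewrite -H0 ltn0.
Qed.

Lemma b_gt0 : (0 < b)%N.
Proof. by move: altb; rewrite a_eq0. Qed.

Lemma eq0bF : (0%N == b) = false.
Proof. by apply/negbTE; rewrite eq_sym -lt0n b_gt0. Qed.

Lemma common_b0 x y : x != y -> c x y = b \/ c x y = 0%N.
Proof. by rewrite -a_eq0; apply: common_ba. Qed.

(* The strongly regular child G_B has mu = 0, witnessed by two vertices in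
   different components of G. *)
Lemma childB_mu0 kB lB mB : srg (childB adj b a) kB lB mB -> mB = 0%N.
Proof.
case=> _ _ _ _ [_ Hm].
have [x0 [y0 [nxy nc c0]]] := disconnected_pair.
have nB : ~~ childB adj b a x0 y0 by rewrite childBE c0 eq0bF andbF.
rewrite -(Hm _ _ nxy nB); apply/eqP; rewrite cards_eq0; apply/eqP/setP => z.
rewrite !inE; apply/negbTE; apply: contra nc => /andP [].
rewrite !childBE => /andP [_ /eqP c1] /andP [_ /eqP c2].
have h1 : connect adj x0 z by apply: common_connect; rewrite c1 b_gt0.
have h2 : connect adj y0 z by apply: common_connect; rewrite c2 b_gt0.
by apply: connect_trans h1 _; rewrite (sym_connect_sym adj_sym).
Qed.

Lemma childB_trans u z w : u != w -> childB adj b a u z -> childB adj b a z w ->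
  childB adj b a u w.
Proof.
move=> nuw uz zw; apply/negPn/negP => nB.
case: Hsd => _ _ [kB [lB [mB HB]]].
have := childB_mu0 HB; case: HB => _ _ _ _ [_ Hm] m0.
have := Hm _ _ nuw nB; rewrite m0 => /eqP; rewrite cards_eq0 => /eqP /setP /(_ z).
by rewrite !inE uz (childB_sym w z) zw.
Qed.

Definition walks3 x y := (\sum_z adj x z * c z y)%N.

Lemma adjmx_cube_entry x y : (A *m (A *m A)) x y = (walks3 x y)%:R.
Proof.
rewrite mxE /walks3 natr_sum; apply: eq_bigr => z _.
by rewrite adjmx_sq ?mxE ?natrM //; apply: adj_sym.
Qed.

(* The entrywise form of A (A - rI)(A - tI) = k (A - rI)(A - tI). *)
Lemma walks3_entry x y : (walks3 x y)%:R = (k%:R + r + t) * (c x y)%:R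
  - (r * t + k%:R * (r + t)) * (adj x y)%:R + (k%:R * r * t) *+ (x == y) :> algC.
Proof.
have AM : A *m ((A - r%:M) *m (A - t%:M)) = k%:R *: ((A - r%:M) *m (A - t%:M)).
  by move/eqP: Hann; rewrite mulmxBl mul_scalar_mx subr_eq0 => /eqP.
have ME : (A - r%:M) *m (A - t%:M) = A *m A - (r + t) *: A + (r * t)%:M.
  apply/matrixP => x' y'; rewrite quad_entry !mxE.
  by have := adjmx_sq adj_sym x' y'; rewrite mxE => ->; ring.
have E3 : A *m (A *m A) = \matrix_(i, j) (walks3 i j)%:R.
  by apply/matrixP => i j; rewrite adjmx_cube_entry mxE.
have E2 : A *m A = \matrix_(i, j) (c i j)%:R.
  by apply/matrixP => i j; rewrite adjmx_sq ?mxE //; exact: adj_sym.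
have := congr1 (fun M : 'M_n => M x y) AM.
rewrite ME mulmxDr mulmxBr -scalemxAr mul_mx_scalar E3 E2 !mxE => E.
have -> : (walks3 x y)%:R = k%:R * ((c x y)%:R - (r + t) * (adj x y)%:R + r * t *+ (x == y))
   + (r + t) * (c x y)%:R - r * t * (adj x y)%:R :> algC by rewrite -E; ring.
by case: (x == y); rewrite ?mulr1n ?mulr0n; ring.
Qed.

(* A non-edge without common neighbours: no walk of length 3 joins its ends,
   so no neighbour of x has a common neighbour with y. *)
Lemma walks3_nonedge x y : x != y -> ~~ adj x y -> c x y = 0%N ->
  forall z, adj x z -> c z y = 0%N.
Proof.
move=> nxy nadj c0 z xz.
have := walks3_entry x y; rewrite (negbTE nadj) c0 (negbTE nxy) !mulr0 mulr0n subr0 addr0.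
move/eqP; rewrite pnatr_eq0 /walks3 sum_nat_eq0 => /forallP /(_ z).
by rewrite xz mul1n => /eqP.
Qed.

Lemma walks3_diag x y : walks3 x x = walks3 y y.
Proof.
apply/eqP; rewrite -(eqr_nat algC) !walks3_entry !(regular_diag adj_reg) !eqxx.
by rewrite (negbTE (adj_irr x)) (negbTE (adj_irr y)).
Qed.

Lemma edge_common0_spreads x y z : adj x y -> c x y = 0%N -> adj x z -> c x z = 0%N.
Proof.
move=> xy c0 xz; have nxz := adj_neq xz; have nxy := adj_neq xy.
case: (common_b0 nxz) => // cxz.
have nyz : y != z.
  by apply/eqP => yz; move: cxz; rewrite -yz c0 => b0; move: b_gt0; rewrite -b0.
have cyz : c y z = b.
  case: (common_b0 nyz) => // cyz0; exfalso.
  have : (0 < c y z)%N.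
    rewrite /common_nbrs card_gt0; apply/set0Pn; exists x.
    by rewrite inE -!(adj_sym x) xy xz.
  by rewrite cyz0.
have : childB adj b a x y.
  apply: (childB_trans (z := z)) => //; rewrite childBE ?nxz ?cxz ?eqxx //.
  by rewrite eq_sym nyz common_sym cyz eqxx.
by rewrite childBE c0 nxy eq0bF.
Qed.

Lemma walks3_diag_cross x : (forall z, adj x z -> c x z = 0%N) -> walks3 x x = 0%N.
Proof.
move=> H; rewrite /walks3 big1 // => z _; case: (boolP (adj x z)) => xz; rewrite ?mul0n //.
by rewrite common_sym H ?muln0.
Qed.

Lemma walks3_diag_internal x : (forall z, adj x z -> c x z = b) -> walks3 x x = (k * b)%N.
Proof.
move=> H; rewrite /walks3 (eq_bigr (fun z => adj x z * b)%N).
  by rewrite -big_distrl /= card_sumb adj_reg.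
by move=> z _; case: (boolP (adj x z)) => xz; rewrite ?mul0n // common_sym H.
Qed.

(* Either no edge of G has a common neighbour, or every edge has b of them:
   a mixture would give vertices with different numbers of closed 3-walks. *)
Lemma edge_dichotomy : (forall x z, adj x z -> c x z = 0%N) \/ (forall x z, adj x z -> c x z = b).
Proof.
have edge_b x z : adj x z -> c x z != 0%N -> c x z = b.
  by move=> xz; case: (common_b0 (adj_neq xz)) => // ->; rewrite eqxx.
case: (boolP [exists x, [exists z, adj x z && (c x z == 0%N)]]); last first.
  rewrite negb_exists => /forallP Hx; right => x z xz; apply: edge_b => //.
  by move: (Hx x); rewrite negb_exists => /forallP /(_ z); rewrite xz.
move=> /existsP [x1 /existsP [z1 /andP [xz1 /eqP c1]]]; left => y z yz.
case: (boolP [exists w, adj y w && (c y w == 0%N)]).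
  by move=> /existsP [w /andP [yw /eqP cw]]; apply: (edge_common0_spreads yw).
rewrite negb_exists => /forallP Hy; exfalso.
have Hint w : adj y w -> c y w = b by move=> yw; apply: edge_b; move: (Hy w); rewrite yw.
have := walks3_diag x1 y.
rewrite (walks3_diag_internal Hint).
rewrite (walks3_diag_cross (fun z xz => edge_common0_spreads xz1 c1 xz)).
by move/eqP; rewrite eq_sym muln_eq0 => /orP [] /eqP e; [move: k_gt0 | move: b_gt0]; rewrite e.
Qed.

Definition bclique y := [set w | (w == y) || childB adj b a y w].

Lemma bclique_card kB lB mB : srg (childB adj b a) kB lB mB -> forall y, #|bclique y| = kB.+1.
Proof.
case=> _ HBreg _ _ _ y.
have -> : bclique y = y |: [set w | childB adj b a y w] by apply/setP => w; rewrite !inE.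
by rewrite cardsU1 inE childBE eqxx /= HBreg.
Qed.

Section NoCommonOnEdges.
Hypothesis Hcr : forall x z, adj x z -> c x z = 0%N.

Lemma nbr_bclique x y : adj x y -> [set w | adj x w] = bclique y.
Proof.
move=> xy; apply/setP => w; rewrite !inE; apply/idP/idP.
  move=> xw; case: (eqVneq w y) => [//|nwy] /=.
  rewrite childBE eq_sym nwy /=.
  have : (0 < c y w)%N.
    rewrite /common_nbrs card_gt0; apply/set0Pn; exists x.
    by rewrite inE -!(adj_sym x) xy xw.
  have nyw : y != w by rewrite eq_sym.
  by case: (common_b0 nyw) => ->; rewrite ?eqxx.
move=> /orP [/eqP -> // | yw]; apply/negPn/negP => nxw.
have cxy := Hcr xy; have nxy := adj_neq xy.
have nxw' : x != w.
  apply: contraTneq yw => <-; rewrite childBE (@common_sym _ adj y x) cxy.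
  by rewrite eq0bF andbF.
case: (common_b0 nxw') => cxw.
  have : childB adj b a x y.
    apply: (childB_trans (z := w)) => //; first by rewrite childBE nxw' cxw eqxx.
    by rewrite childB_sym.
  by rewrite childBE cxy eq0bF andbF.
have := walks3_nonedge nxw' nxw cxw xy.
by move: yw; rewrite childBE => /andP [_ /eqP ->] b0; move: b_gt0; rewrite b0.
Qed.

Lemma cross_two_le_k : (2 <= k)%N.
Proof.
case: Hsd => _ _ [kB [lB [mB HB]]].
have [y xy] := has_nbr ord0.
rewrite -(adj_reg ord0) (nbr_bclique xy) (bclique_card HB) ltnS lt0n.
case: HB => _ HBreg _ HBne _; have [u [w uw]] := edge_exists HBne.
by rewrite -(HBreg u) cards_eq0; apply/set0Pn; exists w; rewrite inE.
Qed.

(* Each component is complete bipartite, with parts the G_B-clique of x and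
   the neighbourhood of x. *)
Lemma cross_bipartite x : complete_bipartite_on adj (component adj x) k.
Proof.
have [y xy] := has_nbr x.
pose X := bclique x; pose Y := [set w | adj x w].
have NY : [set w | adj y w] = X by apply: nbr_bclique; rewrite adj_sym.
have HX u : u \in X -> [set w | adj u w] = Y.
  by rewrite -NY inE => yu; rewrite /Y (nbr_bclique xy); apply: nbr_bclique; rewrite adj_sym.
have HY u : u \in Y -> [set w | adj u w] = X.
  by rewrite inE => xu; apply: nbr_bclique; rewrite adj_sym.
have disj u : u \in X -> u \notin Y.
  rewrite !inE => /orP [/eqP -> | xu]; first exact: adj_irr.
  by apply: contraTN xu => xu'; rewrite childBE (Hcr xu') eq0bF andbF.
have CE : component adj x = X :|: Y.
  apply/setP => u; rewrite inE; apply/idP/idP => H.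
    apply: (connect_invariant adj_sym (S := fun u => u \in X :|: Y)) H; last first.
      by rewrite !inE eqxx.
    move=> u' w uw; rewrite inE => /orP [] Hu.
      by rewrite inE -(HX _ Hu) inE uw orbT.
    by rewrite inE -(HY _ Hu) inE uw.
  move: H; rewrite inE => /orP [] Hu; last by apply: connect1; move: Hu; rewrite inE.
  by apply: connect_trans (connect1 xy) (connect1 _); move: Hu; rewrite -NY inE.
exists X, Y; split => //; [ | by rewrite -NY adj_reg | by rewrite adj_reg | ].
  by apply/setP => u; rewrite in_setI in_set0; case: (boolP (u \in X)) => //= /disj /negbTE.
move=> u w; rewrite CE in_setU => Hu _.
case: (boolP (u \in X)) => uX /=; first by rewrite (negbTE (disj u uX)) orbF -(HX _ uX) inE.
have uY : u \in Y by move: Hu; rewrite (negbTE uX).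
by rewrite uY -(HY _ uY) inE.
Qed.
End NoCommonOnEdges.

Section BOnEdges.
Hypothesis Hint : forall x z, adj x z -> c x z = b.

Lemma edge_childB u w : adj u w -> childB adj b a u w.
Proof. by move=> uw; rewrite childBE adj_neq // Hint ?eqxx. Qed.

Lemma component_bclique x : component adj x = bclique x.
Proof.
apply/setP => y; rewrite inE; apply/idP/idP => H.
  apply: (connect_invariant adj_sym (S := fun y => y \in bclique x)) H; last by rewrite !inE eqxx.
  move=> u w uw; rewrite !inE => /orP [/eqP ux | xu]; first by subst u; rewrite edge_childB ?orbT.
  case: (eqVneq w x) => [//|nwx] /=.
  by apply: (childB_trans (z := u)) => //; [rewrite eq_sym | exact: edge_childB].
move: H; rewrite !inE => /orP [/eqP -> | xy]; first exact: connect0.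
by apply: common_connect; move: xy; rewrite childBE => /andP [_ /eqP ->]; exact: b_gt0.
Qed.

Lemma component_common x y w : y \in component adj x -> w \in component adj x -> y != w ->
  c y w = b.
Proof.
rewrite !component_bclique !inE => /orP [/eqP -> | xy] /orP [/eqP -> | xw] nyw.
- by rewrite eqxx in nyw.
- by move: xw; rewrite childBE => /andP [_ /eqP].
- by move: xy; rewrite childBE (@common_sym _ adj x y) => /andP [_ /eqP].
have : childB adj b a y w by apply: (childB_trans (z := x)) => //; rewrite childB_sym.
by rewrite childBE => /andP [_ /eqP].
Qed.

(* If one component were complete, then k = |bclique| - 1 and G_B = G, so
   A^2 = kI + bA. *)
Lemma complete_component_childB x :
  (forall y w, y \in component adj x -> w \in component adj x -> y != w -> adj y w) ->
  forall u w, childB adj b a u w = adj u w.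
Proof.
move=> Hcomp; case: Hsd => _ _ [kB [lB [mB HB]]].
have nbrC u : u |: [set w | adj u w] \subset component adj u.
  apply/subsetP => w; rewrite !inE => /orP [/eqP -> | uw]; first exact: connect0.
  exact: connect1.
have cU u : #|u |: [set w | adj u w]| = k.+1.
  by rewrite cardsU1 inE (negbTE (adj_irr u)) adj_reg.
have kB_k : kB = k.
  have CE : component adj x = x |: [set w | adj x w].
    apply/eqP; rewrite eqEsubset nbrC andbT; apply/subsetP => w Hw.
    rewrite !inE; case: (eqVneq w x) => [//|nwx] /=.
    by apply: Hcomp => //; [rewrite inE connect0 | rewrite eq_sym].
  have := congr1 (fun S : {set 'I_n} => #|S|) CE.
  by rewrite /= component_bclique (bclique_card HB) cU => [[]].
move=> u w; apply/idP/idP; last exact: edge_childB.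
have compU : component adj u = u |: [set w | adj u w].
  by apply/esym/eqP; rewrite eqEcard nbrC component_bclique (bclique_card HB) cU kB_k leqnn.
move=> uw; have : w \in component adj u by rewrite component_bclique inE uw orbT.
by rewrite compU !inE => /orP [/eqP wu | //]; move: uw; rewrite childBE wu eqxx.
Qed.

(* With three eigenvalues k, r, t no component is complete: otherwise both r
   and t would equal the other root b - k of X^2 - bX - k. *)
Lemma component_not_complete x :
  eigenvalue A r -> eigenvalue A t -> r != k%:R -> t != k%:R -> r != t ->
  ~ (forall y w, y \in component adj x -> w \in component adj x -> y != w -> adj y w).
Proof.
move=> Hr Ht rk tk rt /complete_component_childB BA.
have BmA : Bm = A by apply/matrixP => u w; rewrite !mxE BA.
have AA : A *m A = k%:R%:M + b%:R *: A.
  by rewrite adjmx_sq_deza BmA a_eq0 scale0r addr0.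
have other_root th : eigenvalue A th -> th != k%:R -> th = b%:R - k%:R.
  move=> Hth thk; have Rk := eigenvalue_quadratic AA k_eig.
  have Rth := eigenvalue_quadratic AA Hth.
  have : (k%:R - th) * (k%:R + th - b%:R) = 0.
    have -> : (k%:R - th) * (k%:R + th - b%:R) =
      (k%:R ^+ 2 - (k%:R + b%:R * k%:R)) - (th ^+ 2 - (k%:R + b%:R * th)) :> algC by ring.
    by rewrite Rk Rth !subrr.
  move/eqP; rewrite mulf_eq0 subr_eq0 eq_sym (negbTE thk) /= => /eqP E.
  by apply/eqP; rewrite -subr_eq0 -E; apply/eqP; ring.
by move/eqP: rt; apply; rewrite (other_root r) // (other_root t).
Qed.

Lemma internal_components : eigenvalue A r -> eigenvalue A t ->
  r != k%:R -> t != k%:R -> r != t ->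
  exists v, forall x, srg_on adj (component adj x) v k b b.
Proof.
move=> Hr Ht rk tk rt; case: Hsd => _ _ [kB [lB [mB HB]]].
exists kB.+1 => x.
have inC y z : y \in component adj x -> adj y z -> z \in component adj x.
  by rewrite !inE => xy yz; apply: connect_trans xy (connect1 yz).
have cnt y w : y \in component adj x ->
    #|[set z in component adj x | adj y z && adj w z]| = c y w.
  move=> Hy; rewrite /common_nbrs; apply: eq_card => z; rewrite !inE.
  by apply/andb_idl => /andP [yz _]; rewrite -inE; apply: inC yz.
split.
- by rewrite component_bclique (bclique_card HB).
- move=> y Hy; rewrite -(adj_reg y); apply: eq_card => z; rewrite !inE.
  by apply/andb_idl => yz; rewrite -inE; apply: inC yz.
- exact: component_not_complete.
- move=> H; have [z xz] := has_nbr x.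
  have Hx : x \in component adj x by rewrite inE connect0.
  by move: (H x z Hx (inC _ _ Hx xz)); rewrite xz.
by split => y w Hy Hw nyw _; rewrite cnt // (component_common Hy Hw nyw).
Qed.
End BOnEdges.
End Disconnected.

Lemma part_iii : num_eigenvalues A 3 ->
        [\/ exists lam mu, srg adj k lam mu /\
              ((lam = a /\ mu = b) \/ (lam = b /\ mu = a)),
            ~ connected_graph adj /\
              (exists v, forall x, srg_on adj (component adj x) v k b b)
          | (2 <= k)%N /\ forall x, complete_bipartite_on adj (component adj x) k].
Proof.
case=> s [us ss Hs].
have ks : k%:R \in s by apply/Hs/k_eig.
have Hann0 := eig_annihilator us Hs.
have P := perm_to_rem ks.
have : size (rem k%:R s) = 2%N by rewrite size_rem ?ss.
move: Hann0 P; case: (rem k%:R s) => [|r [|t []]] // Hann0 P _.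
rewrite big_cons big_seq1 !rmorphM /= !horner_mx_XsubC -!mulmxE in Hann0.
move: (us); rewrite (perm_uniq P) /= !inE negb_or => /andP [/andP [kr kt] /andP [rt _]].
have Hr : eigenvalue A r by apply/Hs; rewrite (perm_mem P) !inE eqxx orbT.
have Ht : eigenvalue A t by apply/Hs; rewrite (perm_mem P) !inE eqxx !orbT.
have [Hc | nHc] := boolP [forall x, [forall y, connect adj x y]].
  apply: Or31; apply: (connected_case (r := r) (t := t)) => // x y.
  by move/forallP: Hc => /(_ x) /forallP /(_ y).
have Hnc : ~ connected_graph adj.
  by move=> H; case/negP: nHc; apply/forallP => x; apply/forallP => y; exact: H.
case: (edge_dichotomy Hnc Hann0) => H.
  by apply: Or33; split; [exact: cross_two_le_k Hann0 H | exact: cross_bipartite Hann0 H].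
by apply: Or32; split => //; apply: (internal_components Hnc H Hr Ht); rewrite // eq_sym.
Qed.
End StronglyDeza.
Local Close Scope ring_scope.

Theorem proposition1 (n : nat) (adj : rel 'I_n) (k b a : nat) :
  strongly_deza adj k b a ->
  [/\ (* (i) *)
      exists m, m <= 5 /\ num_eigenvalues (adjmx adj) m,
      (* (ii) *)
      num_eigenvalues (adjmx adj) 2 ->
        [/\ a = 0, b = k - 1, 1 <= b & union_of_cliques adj k.+1] &
      (* (iii) *)
      num_eigenvalues (adjmx adj) 3 ->
        [\/ exists lam mu, srg adj k lam mu /\
              ((lam = a /\ mu = b) \/ (lam = b /\ mu = a)),
            ~ connected_graph adj /\
              (exists v, forall x, srg_on adj (component adj x) v k b b)
          | 2 <= k /\ forall x, complete_bipartite_on adj (component adj x) k]].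
Proof.
(* On the empty vertex set every graph is complete, which a Deza graph is not. *)
case: n adj => [|n'] adj Hsd.
  by exfalso; case: Hsd => [[_ _ Hnc _ _]] _ _; apply: Hnc => x; case: x.
by split; [exact: part_i Hsd | exact: part_ii Hsd | exact: part_iii Hsd].
Qed.
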